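(* For $n\ge 1$, let $\gamma(n)$ denote the number of partitions of $n$ having no part equal to $1$ and in which the largest part appears at least twice. Then for all $n\ge 26$, $$\gamma(n)\ \ge\ \gamma(n-1).$$
   Context: Partitions with no part equal to $1$ whose largest part occurs at least twice are called ground state non-unitary partitions; $\gamma(n)$ counts those of size $n$ (for $n\ge1$). *)

From mathcomp Require Import all_boot.
Set Implicit Arguments. Unset Strict Implicit. Unset Printing Implicit Defensive.

Definition is_partition (n : nat) (s : seq nat) : bool :=
  [&& sorted geq s, all (fun x => 0 < x) s & sumn s == n].

Fixpoint parts_le (fuel m n : nat) : seq (seq nat) :=
  match fuel with
  | 0 => if n == 0 then [:: [::]] else [::]
  | fuel'.+1 =>
      if n == 0 then [:: [::]]
      else flatten [seq [seq k :: s | s <- parts_le fuel' k (n - k)]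
                   | k <- iota 1 (minn m n)]
  end.

(* The list of all partitions of n (each exactly once), filtered by the
   defining predicate for transparency. *)
Definition partitions (n : nat) : seq (seq nat) :=
  [seq s <- parts_le n n n | is_partition n s].

(* Ground state non-unitary: no part equal to 1, and the largest part
   (the head of the nonincreasing sequence) occurs at least twice. *)
Definition gsnu (s : seq nat) : bool :=
  (1 \notin s) && (1 < count_mem (head 0 s) s).

Definition gamma (n : nat) : nat := count gsnu (partitions n).

(* Write ngs a n for the number of partitions of n with all parts at least a
   whose largest part occurs at least twice, so that gamma = ngs 2. Removing
   one copy of the smallest part gives ngs a n = ngs a.+1 n + ngs a (n - a)
   for 2a < n, and unfolding this for a = 2, 3 yields
     ngs 2 n - ngs 2 (n - 1) =
       (ngs 4 n + ngs 4 (n - 2) - ngs 4 (n - 1)) + (ngs 2 (n - 6) - ngs 2 (n - 7)).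
   By strong induction (with the six base cases 26..31 checked by computation)
   it thus suffices that ngs 4 (n - 1) <= ngs 4 n + ngs 4 (n - 2). This is shown
   for each largest part m separately: for the remainder M = n - 2m >= 2,
     p(M - 1) + p'(M) <= p(M) + p(M - 2),
   where p and p' count the partitions with parts in [4, m] and in [6, m]
   (an injection argument on the smallest parts). The only defects, at m = 4
   and at n = 2m + 1, are paid for by two of the partitions counted by p'. *)

From mathcomp Require Import all_boot zify.
Set Implicit Arguments. Unset Strict Implicit. Unset Printing Implicit Defensive.

Lemma leq_sum_nat lo hi (F1 F2 : nat -> nat) :
  (forall i, lo <= i < hi -> F1 i <= F2 i) ->
  \sum_(lo <= i < hi) F1 i <= \sum_(lo <= i < hi) F2 i.
Proof.
move=> le12; rewrite big_nat_cond [X in _ <= X]big_nat_cond.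
by apply: leq_sum => i /andP[/le12].
Qed.

Lemma sum_nat_eqb lo hi c : \sum_(lo <= i < hi) (i == c : nat) = (lo <= c < hi).
Proof.
rewrite (eq_bigr (fun i => if i == c then 1 else 0)) => [|i _]; last by case: eqP.
by rewrite -big_mkcond big_nat1_eq; case: ifP.
Qed.

Lemma sum_nat_cut lo hi c (F : nat -> nat) :
  \sum_(lo <= i < hi) (if i < c then F i else 0) = \sum_(lo <= i < minn hi c) F i.
Proof.
rewrite [RHS](big_nat_widen _ _ _ _ _ (geq_minl hi c)) [RHS]big_mkcond.
by apply: eq_big_nat => i /andP[_ lt_i_hi]; rewrite leq_min lt_i_hi.
Qed.

(* [npart a m n] counts the partitions of [n] with all parts in [[a, m]];
   the fuel [n.+1] suffices when [0 < a]. *)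
Fixpoint npart_fuel (fuel a m n : nat) : nat :=
  match fuel with
  | 0 => n == 0
  | fuel.+1 =>
      if n == 0 then 1 else \sum_(a <= k < (minn m n).+1) npart_fuel fuel a k (n - k)
  end.

Definition npart a m n := npart_fuel n.+1 a m n.

Lemma npart0 a m : npart a m 0 = 1.
Proof. by []. Qed.

Lemma npart_fuelE a fuel m n : 0 < a -> n < fuel ->
  npart_fuel fuel a m n = npart a m n.
Proof.
move=> a_gt0; have fuel_irr f1 f2 m' n' :
    n' < f1 -> n' < f2 -> npart_fuel f1 a m' n' = npart_fuel f2 a m' n'.
  elim: f1 f2 m' n' => [|f1 IH] [|f2] m' n' //= lt_f1 lt_f2.
  case: eqP => // n_neq0; apply: eq_big_nat => k /andP[le_ak _]; apply: IH; lia.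
by move=> lt_n_fuel; apply: fuel_irr.
Qed.

Lemma npartE a m n : 0 < a ->
  npart a m n = if n == 0 then 1 else \sum_(a <= k < (minn m n).+1) npart a k (n - k).
Proof.
move=> a_gt0; rewrite {1}/npart /=; case: eqP => // n_neq0.
by apply: eq_big_nat => k /andP[le_ak _]; apply: npart_fuelE; lia.
Qed.

Lemma npart_eq0 a m n : 0 < a -> m < a -> 0 < n -> npart a m n = 0.
Proof. by move=> a_gt0 lt_ma n_gt0; rewrite npartE // gtn_eqF // big_geq //; lia. Qed.

Lemma npart1 a m : 1 < a -> npart a m 1 = 0.
Proof. by move=> a_gt1; rewrite npartE /=; [rewrite big_geq //; lia | lia]. Qed.

Lemma npart_single a n : 0 < a -> npart a a n <= 1.
Proof.
move=> a_gt0; elim/ltn_ind: n => n IH; rewrite npartE //.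
case: eqP => // n_neq0; case: (leqP a n) => [le_an | lt_na].
  by rewrite big_nat1 IH //; lia.
by rewrite big_geq //; lia.
Qed.

Lemma npart_gt0 a m n : 0 < a -> a <= n -> n <= m -> 0 < npart a m n.
Proof.
move=> a_gt0 le_an le_nm; rewrite npartE // gtn_eqF; last lia.
by rewrite (minn_idPr le_nm) big_nat_recr //= subnn npart0 addn1.
Qed.

(* Either [a] is not a part, or one part [a] can be removed. *)
Lemma npart_split_min a m n : 0 < a ->
  npart a m n = npart a.+1 m n + (if (a <= m) && (a <= n) then npart a m (n - a) else 0).
Proof.
move=> a_gt0; elim/ltn_ind: n m => n IH m.
case: (posnP n) => [-> | n_gt0]; first by rewrite !npart0 ifF //; lia.
rewrite npartE // [npart a.+1 m n]npartE // gtn_eqF //.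
case: (leqP a (minn m n)) => [le_a_min | lt_min_a]; last first.
  by rewrite ifF; [rewrite !big_geq //; lia | lia].
rewrite ifT; last lia.
have -> : \sum_(a <= k < (minn m n).+1) npart a k (n - k) =
    \sum_(a <= k < (minn m n).+1) npart a.+1 k (n - k) +
    \sum_(a <= k < (minn m n).+1) (if k < (n - a).+1 then npart a k (n - a - k) else 0).
  rewrite -big_split; apply: eq_big_nat => k /andP[le_ak lt_k].
  rewrite IH; last lia.
  rewrite le_ak /=; have -> : (a <= n - k) = (k < (n - a).+1) by lia.
  by case: ifP => //; have -> : n - k - a = n - a - k by lia.
rewrite sum_nat_cut big_ltn; last lia.
have -> : minn (minn m n).+1 (n - a).+1 = (minn m (n - a)).+1 by lia.
rewrite -addnA addnCA; congr (_ + _).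
rewrite [RHS]npartE //; case: eqP => [n_eq_a | n_neq_a].
  by rewrite n_eq_a npart0 big_geq //; lia.
by rewrite npart_eq0 //; lia.
Qed.

Lemma leq_npart_minS a m n : 0 < a -> npart a.+1 m n <= npart a m n.
Proof. by move=> a_gt0; rewrite [leqRHS](npart_split_min m n a_gt0) leq_addr. Qed.

Lemma npart_by_min a m n : 0 < a ->
  npart a m n = (n == 0) + \sum_(a <= k < m.+1) (if k <= n then npart k m (n - k) else 0).
Proof.
move def_d : (m.+1 - a) => d; elim: d a def_d => [|d IH] a def_d a_gt0.
  rewrite big_geq; last lia.
  case: (posnP n) => [-> | n_gt0]; first by rewrite npart0.
  by rewrite npart_eq0 ?gtn_eqF //; lia.
rewrite npart_split_min // IH //; last lia.
rewrite [in RHS]big_ltn; last lia.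
by rewrite (_ : a <= m) /=; lia.
Qed.

(* Partitions with all parts at least [a.+2] and partitions containing a part
   [a.+1] are disjoint. *)
Lemma leq_npart_succ_part a m n : 0 < a -> a < m ->
  npart a.+2 m n + (if a < n then npart a m (n - a.+1) else 0) <= npart a m n.
Proof.
move=> a_gt0 lt_am; elim/ltn_ind: n => n IH.
case: (ltnP a n) => [lt_an | le_na]; last first.
  by rewrite addn0 (leq_trans (leq_npart_minS m n (ltn0Sn a))) // leq_npart_minS.
have := IH (n - a) ltac:(lia).
rewrite (npart_split_min m n a_gt0) (npart_split_min m n (ltn0Sn a)).
rewrite (npart_split_min m (n - a.+1) a_gt0).
have -> : (a <= m) && (a <= n) by lia.
have -> : (a.+1 <= m) && (a.+1 <= n) by lia.
have -> : a <= m by lia.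
have -> : n - a.+1 - a = n - a - a.+1 by lia.
case: ifP; case: ifP; lia.
Qed.

(* Lower the smallest part by one. *)
Lemma leq_npart_shift a m n : 0 < a -> 1 < n -> npart a.+1 m n.-1 <= npart a m (n - 2).
Proof.
move=> a_gt0 n_gt1.
rewrite (npart_by_min _ _ (ltn0Sn a)) (npart_by_min _ _ a_gt0) gtn_eqF ?add0n; last lia.
apply: leq_trans (leq_addl _ _).
case: (leqP a m) => [le_am | lt_ma]; last by rewrite big_geq //; lia.
rewrite big_add1 /= (big_nat_recr _ _ _ le_am) /=.
apply: leq_trans (leq_addr _ _); apply: leq_sum_nat => k /andP[le_ak lt_km].
have -> : (k.+1 <= n.-1) = (k <= n - 2) by lia.
case: ifP => // _; have -> : n.-1 - k.+1 = n - 2 - k by lia.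
by apply: leq_npart_minS; lia.
Qed.

Lemma npart_pred_le a m n : 0 < a -> a < m -> 1 < n ->
  npart a m n.-1 + npart a.+2 m n <= npart a m n + npart a m (n - 2).
Proof.
move=> a_gt0 lt_am n_gt1.
have := leq_npart_succ_part n a_gt0 lt_am.
have := leq_npart_shift m a_gt0 n_gt1.
rewrite (npart_split_min m n.-1 a_gt0).
have -> : (a <= m) && (a <= n.-1) = (a < n) by lia.
have -> : n.-1 - a = n - a.+1 by lia.
case: ifP; lia.
Qed.

(* [gs_term a n m] is the part of [ngs a n] with largest part [m]: two copies
   of [m] are set aside, the rest has parts in [[a, m]]. *)
Definition gs_term a n m := if 2 * m <= n then npart a m (n - 2 * m) else 0.

Definition ngs a n := \sum_(a <= m < n.+1) gs_term a n m.

Lemma mem_parts_le fuel m n s : s \in parts_le fuel m n ->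
  [&& sorted geq s, all (fun x => 0 < x) s, sumn s == n & all (fun x => x <= m) s].
Proof.
elim: fuel m n s => [|f IH] m n s /=.
  by case: eqP => [-> | _]; rewrite ?inE // => /eqP ->.
case: eqP => [-> | n_neq0]; first by rewrite inE => /eqP ->.
move/flattenP => [_ /mapP[k k_in ->] /mapP[s' s'_in ->]].
move: k_in; rewrite mem_iota => /andP[k_gt0 k_lt].
have /and4P[s'_sorted s'_pos /eqP s'_sum s'_le] := IH _ _ _ s'_in.
rewrite /= (path_sortedE (rev_trans leq_trans)) s'_sorted s'_pos s'_sum /= !andbT.
apply/and5P; split; try lia.
by apply/allP => x /(allP s'_le); lia.
Qed.

Lemma count_parts_le_no1 fuel m n :
  count (fun s => 1 \notin s) (parts_le fuel m n) = npart_fuel fuel 2 m n.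
Proof.
elim: fuel m n => [|f IH] m n /=; first by case: (n == 0).
case: eqP => // n_neq0.
rewrite count_flatten -map_comp sumnE big_map.
rewrite (_ : iota 1 _ = index_iota 1 (minn m n).+1); last by rewrite /index_iota subn1.
case: m => [|m]; first by rewrite min0n !big_geq.
rewrite big_ltn; last lia.
rewrite /= count_map (eq_count (a2 := pred0)) // count_pred0 add0n.
apply: eq_big_nat => k /andP[k_gt1 _] /=; rewrite count_map -IH.
by apply: eq_count => s /=; rewrite inE negb_or ltn_eqF.
Qed.

Lemma count_parts_le_no1_max fuel k n : 1 < k ->
  count (fun s => (1 \notin s) && (k \in s)) (parts_le fuel.+1 k n) =
  if (0 < n) && (k <= n) then npart_fuel fuel 2 k (n - k) else 0.
Proof.
move=> k_gt1 /=; case: eqP => [-> | n_neq0] //=.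
rewrite count_flatten -map_comp sumnE big_map.
rewrite (_ : iota 1 _ = index_iota 1 (minn k n).+1); last by rewrite /index_iota subn1.
have head_lt_k j : j < k ->
    count (fun s => (1 \notin s) && (k \in s)) [seq j :: s | s <- parts_le fuel j (n - j)] = 0.
  move=> lt_jk; rewrite count_map (eq_in_count (a2 := pred0)) ?count_pred0 // => s s_in /=.
  rewrite [k \in _]inE gtn_eqF //=.
  have /and4P[_ _ _ /allP s_le_j] := mem_parts_le s_in.
  by case: (boolP (k \in s)) => [/s_le_j | _]; [lia | rewrite andbF].
case: (leqP k n) => [le_kn | lt_nk]; last first.
  by rewrite andbF big_nat_cond big1 // => j /andP[/andP[_ lt_j] _]; apply: head_lt_k; lia.
rewrite ifT; last lia.
rewrite big_nat_recr /=; last lia.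
rewrite big_nat_cond big1 => [|j /andP[/andP[_ lt_jk] _]]; last exact: head_lt_k.
rewrite add0n count_map -count_parts_le_no1.
by apply: eq_count => s /=; rewrite mem_head andbT inE negb_or ltn_eqF.
Qed.

Lemma gamma_ngs n : gamma n = ngs 2 n.
Proof.
rewrite /gamma /partitions count_filter.
rewrite (eq_in_count (a2 := gsnu)) => [|s s_in]; last first.
  have /and4P[s_sorted s_pos s_sum _] := mem_parts_le s_in.
  by rewrite /= /is_partition s_sorted s_pos s_sum !andbT.
case: n => [|n]; first by rewrite /ngs big_geq.
rewrite /= count_flatten -map_comp sumnE big_map minnn.
rewrite (_ : iota 1 _ = index_iota 1 n.+2); last by rewrite /index_iota subn1.
rewrite big_ltn // /= count_map (eq_count (a2 := pred0)) // count_pred0 add0n.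
apply: eq_big_nat => k /andP[k_gt1 lt_k]; rewrite count_map.
rewrite (eq_count (a2 := fun s => (1 \notin s) && (k \in s))); last first.
  move=> s; rewrite /gsnu /= eqxx inE negb_or add1n ltnS -has_count has_pred1.
  by rewrite ltn_eqF.
case: n lt_k => [|n] lt_k; first lia.
rewrite count_parts_le_no1_max // /gs_term.
have -> : (0 < n.+2 - k) && (k <= n.+2 - k) = (2 * k <= n.+2) by lia.
case: ifP => // le_2k; rewrite npart_fuelE //; last lia.
by rewrite mul2n -addnn subnDA.
Qed.

Lemma ngs_widen a n K : n < K -> ngs a n = \sum_(a <= m < K) gs_term a n m.
Proof.
move=> lt_nK; rewrite /ngs (big_nat_widen _ _ _ _ _ lt_nK) big_mkcond.
by apply: eq_bigr => m _; case: ltnP => // lt_nm; rewrite /gs_term ifF //; lia.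
Qed.

Lemma ngs_rec a n : 0 < a -> 2 * a < n -> ngs a n = ngs a.+1 n + ngs a (n - a).
Proof.
move=> a_gt0 lt_2a_n.
have split_term m : a <= m ->
    gs_term a n m = gs_term a.+1 n m + gs_term a (n - a) m.
  move=> le_am; rewrite /gs_term; case: (leqP (2 * m) n) => [le_2m_n | lt_n_2m].
    rewrite npart_split_min // le_am /=; have -> : (2 * m <= n - a) = (a <= n - 2 * m) by lia.
    by case: ifP => //; have -> : n - 2 * m - a = n - a - 2 * m by lia.
  by rewrite ifF //; lia.
rewrite /ngs (big_ltn (m := a)); last lia.
rewrite (eq_big_nat _ _ (F2 := fun m => gs_term a.+1 n m + gs_term a (n - a) m)); last first.
  by move=> m /andP[lt_am _]; apply: split_term; lia.
rewrite split_term // {1}/gs_term ifT; last lia.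
rewrite npart_eq0 // ?add0n; last lia.
rewrite big_split /= addnCA -big_ltn; last lia.
by congr (_ + _); symmetry; apply: ngs_widen; lia.
Qed.

Lemma gs_term_pred_le a n m : 1 < a -> a <= m ->
  gs_term a n.-1 m + (if a < m then gs_term a.+2 n m else 0) <=
  gs_term a n m + gs_term a (n - 2) m + (m == n %/ 2) + (m == a).
Proof.
move=> a_gt1 le_am; rewrite /gs_term.
have [-> | m_neq_a] := eqVneq m a.
  rewrite ltnn addn0; case: ifP => _; last lia.
  by have := npart_single (n.-1 - 2 * a) (ltnW a_gt1); lia.
have lt_am : a < m by lia.
rewrite lt_am; have [le_n_2m1 | lt_2m1_n] := leqP n (2 * m).+1.
  have -> : (2 * m <= n - 2) = false by lia.
  have [lt_n_2m | le_2m_n] := ltnP n (2 * m).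
    by rewrite !ifF //; lia.
  have [n_eq | n_eq] : n = 2 * m \/ n = (2 * m).+1 by lia.
    by rewrite ifF ?n_eq ?subnn ?npart0 ?leqnn //; lia.
  by rewrite n_eq /= leqnn subnn subSnn npart0 !npart1 //; lia.
rewrite !ifT; try lia.
do 2 apply: leq_trans (leq_addr _ _).
have -> : n.-1 - 2 * m = (n - 2 * m).-1 by lia.
have -> : n - 2 - 2 * m = n - 2 * m - 2 by lia.
by apply: npart_pred_le; lia.
Qed.

(* At [m = n %/ 2 - 3] and [m = n %/ 2 - 4] the remainder [n - 2 * m] lies in
   [[6, m]]; this is where [26 <= n] is needed. *)
Lemma sum_gs_term6_ge2 n : 26 <= n ->
  2 <= \sum_(4 <= m < n.+1) (if 4 < m then gs_term 6 n m else 0).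
Proof.
move=> n_ge26.
pose witness m := (m == n %/ 2 - 3) + (m == n %/ 2 - 4).
apply: leq_trans (leq_sum_nat (F1 := witness) _).
  by rewrite big_split /= !sum_nat_eqb; lia.
move=> m _; rewrite /witness.
have [m_witness | ] := boolP ((m == n %/ 2 - 3) || (m == n %/ 2 - 4)); last first.
  by case/norP => /negbTE -> /negbTE ->.
rewrite /gs_term !ifT; try lia.
by have := @npart_gt0 6 m (n - 2 * m) isT ltac:(lia) ltac:(lia); lia.
Qed.

Lemma ngs4_pred_le n : 26 <= n -> ngs 4 n.-1 <= ngs 4 n + ngs 4 (n - 2).
Proof.
move=> n_ge26.
rewrite (@ngs_widen 4 n.-1 n.+1) ?(@ngs_widen 4 (n - 2) n.+1) /ngs; try lia.
have := leq_sum_nat (fun m (hm : 4 <= m < n.+1) =>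
  gs_term_pred_le n (isT : 1 < 4) (proj1 (andP hm))).
rewrite !big_split /= !sum_nat_eqb.
by have := sum_gs_term6_ge2 n_ge26; lia.
Qed.

Lemma ngs2_diffE n : 10 <= n ->
  ngs 2 n + ngs 4 n.-1 + ngs 2 (n - 7) = ngs 2 n.-1 + ngs 4 n + ngs 4 (n - 2) + ngs 2 (n - 6).
Proof.
move=> n_ge10.
have rec2 k : k <= 5 -> ngs 2 (n - k) = ngs 3 (n - k) + ngs 2 (n - k.+2).
  by move=> le_k5; rewrite ngs_rec -?subnDA ?addn2 //; lia.
have rec3 k : k <= 2 -> ngs 3 (n - k) = ngs 4 (n - k) + ngs 3 (n - k.+3).
  by move=> le_k2; rewrite ngs_rec -?subnDA ?addn3 //; lia.
have := rec2 0; have := rec2 1; have := rec2 2; have := rec2 3; have := rec2 4; have := rec2 5.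
have := rec3 0; have := rec3 1; have := rec3 2.
rewrite !subn0 -subn1; lia.
Qed.

Lemma gamma_mono_small : all (fun n => gamma n.-1 <= gamma n) (iota 26 6).
Proof. by vm_compute. Qed.

Lemma ngs2_pred_le n : 26 <= n -> ngs 2 n.-1 <= ngs 2 n.
Proof.
elim/ltn_ind: n => n IH n_ge26.
have [n_le31 | n_gt31] := leqP n 31.
  rewrite -!gamma_ngs; apply: (allP gamma_mono_small); rewrite mem_iota; lia.
have := IH (n - 6) ltac:(lia) ltac:(lia).
have := @ngs4_pred_le n ltac:(lia).
have := @ngs2_diffE n ltac:(lia).
by rewrite (_ : (n - 6).-1 = n - 7); lia.
Qed.

Theorem proposition2 (n : nat) : 26 <= n -> gamma n.-1 <= gamma n.
Proof. by rewrite !gamma_ngs; apply: ngs2_pred_le. Qed.
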